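(* Let $(\bm M_s)$ and $(\tilde{\bm M}_s)$ be sequences of parameters with $\bm M_s,\tilde{\bm M}_s\in\mathcal M$ for all $s$. Then for every $t$, $$\max_{1\le i\le k_x}\big|g^x_i(\bm M_{t-H:t-1})-g^x_i(\tilde{\bm M}_{t-H:t-1})\big|\le L_g(H)\sum_{k=1}^H(1-\gamma)^{k-1}\|\bm M_{t-k}-\tilde{\bm M}_{t-k}\|_F,$$ $$\max_{1\le j\le k_u}\big|g^u_j(\bm M_{t-H:t})-g^u_j(\tilde{\bm M}_{t-H:t})\big|\le L_g(H)\sum_{k=0}^H(1-\gamma)^{\max(k-1,0)}\|\bm M_{t-k}-\tilde{\bm M}_{t-k}\|_F,$$ where $L_g(H)=\bar w\sqrt n\max(\|D_x\|_\infty,\|D_u\|_\infty)\kappa^3\kappa_B\sqrt H$.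
   Context: $A\in\mathbb R^{n\times n}$, $B\in\mathbb R^{n\times m}$, $\bar w>0$, $D_x\in\mathbb R^{k_x\times n}$, $D_u\in\mathbb R^{k_u\times m}$ with rows $D_{x,i}^\top$, $D_{u,j}^\top$; matrix $\|\cdot\|_\infty$ = max absolute row sum, $\|\cdot\|_2$ spectral norm, $\|\cdot\|_1$ vector 1-norm. For $\kappa\ge1$, $\gamma\in(0,1]$, $K$ is $(\kappa,\gamma)$-strongly stable if $A-BK=Q^{-1}LQ$ with $\|L\|_2\le1-\gamma$ and $\max(\|Q\|_2,\|Q^{-1}\|_2,\|K\|_2)\le\kappa$; $\kappa_B=\max(\|B\|_2,1)$. Fix $(\kappa,\gamma)$-strongly stable $\mathbb K$, $A_{\mathbb K}=A-B\mathbb K$, $H\ge1$. Parameters $\bm M=(M^{[1]},\dots,M^{[H]})$, $M^{[i]}\in\mathbb R^{m\times n}$, with $\|\bm M\|_F=(\sum_i\|M^{[i]}\|_F^2)^{1/2}$; $\mathcal M=\{\bm M:\|M^{[i]}\|_\infty\le2\sqrt n\kappa^3(1-\gamma)^{i-1}\}$. $\Phi^x_k(\bm M_{t-H:t-1})=A_{\mathbb K}^{k-1}\mathds1_{(k\le H)}+\sum_{i=1}^HA_{\mathbb K}^{i-1}BM_{t-i}^{[k-i]}\mathds1_{(1\le k-i\le H)}$, $\Phi^u_k(\bm M_{t-H:t})=M_t^{[k]}\mathds1_{(k\le H)}-\mathbb K\Phi^x_k(\bm M_{t-H:t-1})$ for $k=1,\dots,2H$. $g^x_i(\bm M_{t-H:t-1})=\bar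 w\sum_{k=1}^{2H}\|D_{x,i}^\top\Phi^x_k(\bm M_{t-H:t-1})\|_1$ and $g^u_j(\bm M_{t-H:t})=\bar w\sum_{k=1}^{2H}\|D_{u,j}^\top\Phi^u_k(\bm M_{t-H:t})\|_1$. *)

From HB Require Import structures.
From mathcomp Require Import all_boot all_order all_algebra.
From mathcomp Require Import boolp classical_sets reals.
Set Implicit Arguments. Unset Strict Implicit. Unset Printing Implicit Defensive.
Import Order.TTheory GRing.Theory Num.Theory.
Local Open Scope ring_scope.

Section Defs.
Variable R : realType.

Definition vnorm2 {n : nat} (v : 'cV[R]_n) : R :=
  Num.sqrt (\sum_(i < n) v i 0 ^+ 2).

Definition opnorm2 {p q : nat} (A : 'M[R]_(p, q)) : R :=
  sup [set r : R | exists v : 'cV[R]_q, vnorm2 v <= 1 /\ r = vnorm2 (A *m v)].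

Definition mxnorm_inf {p q : nat} (A : 'M[R]_(p, q)) : R :=
  \big[Num.max/0]_(i < p) \sum_(j < q) `|A i j|.

Definition frob {p q : nat} (A : 'M[R]_(p, q)) : R :=
  Num.sqrt (\sum_(i < p) \sum_(j < q) A i j ^+ 2).

Definition rnorm1 {q : nat} (v : 'rV[R]_q) : R := \sum_(j < q) `|v 0 j|.

Definition strongly_stable {n m : nat} (A : 'M[R]_n) (B : 'M[R]_(n, m))
    (K : 'M[R]_(m, n)) (kappa gamma : R) : Prop :=
  exists (Q L : 'M[R]_n),
    [/\ Q \in unitmx, A - B *m K = invmx Q *m L *m Q,
        opnorm2 L <= 1 - gamma &
        [/\ opnorm2 Q <= kappa, opnorm2 (invmx Q) <= kappa & opnorm2 K <= kappa]].

Definition kappaB {n m : nat} (B : 'M[R]_(n, m)) : R := Num.max (opnorm2 B) 1.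

(* A parameter bold-M = (M^[1], ..., M^[H]) is represented as a function
   nat -> 'M_(m,n); only the indices 1..H are ever used. *)
Definition param (m n : nat) := nat -> 'M[R]_(m, n).

Definition param_frob {m n : nat} (H : nat) (M : param m n) : R :=
  Num.sqrt (\sum_(1 <= i < H.+1) frob (M i) ^+ 2).

Definition param_sub {m n : nat} (M M' : param m n) : param m n :=
  fun i => M i - M' i.

Definition in_calM {m n : nat} (H : nat) (kappa gamma : R) (M : param m n) : Prop :=
  forall i : nat, (1 <= i <= H)%N ->
    mxnorm_inf (M i) <= 2 * Num.sqrt n%:R * kappa ^+ 3 * (1 - gamma) ^+ i.-1.

Definition Phix {n m : nat} (A : 'M[R]_n) (B : 'M[R]_(n, m)) (K : 'M[R]_(m, n))
    (H : nat) (Ms : int -> param m n) (t : int) (k : nat) : 'M[R]_n :=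
  (if (k <= H)%N then (A - B *m K) ^+ k.-1 else 0) +
  \sum_(1 <= i < H.+1)
     (if (i < k)%N && (k - i <= H)%N
      then (A - B *m K) ^+ i.-1 *m B *m Ms (t - i%:Z) (k - i)%N
      else 0).

Definition Phiu {n m : nat} (A : 'M[R]_n) (B : 'M[R]_(n, m)) (K : 'M[R]_(m, n))
    (H : nat) (Ms : int -> param m n) (t : int) (k : nat) : 'M[R]_(m, n) :=
  (if (k <= H)%N then Ms t k else 0) - K *m Phix A B K H Ms t k.

Definition gx {n m kx : nat} (A : 'M[R]_n) (B : 'M[R]_(n, m)) (K : 'M[R]_(m, n))
    (Dx : 'M[R]_(kx, n)) (wbar : R) (H : nat) (Ms : int -> param m n) (t : int)
    (i : 'I_kx) : R :=
  wbar * \sum_(1 <= k < (2 * H).+1) rnorm1 (row i Dx *m Phix A B K H Ms t k).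

Definition gu {n m ku : nat} (A : 'M[R]_n) (B : 'M[R]_(n, m)) (K : 'M[R]_(m, n))
    (Du : 'M[R]_(ku, m)) (wbar : R) (H : nat) (Ms : int -> param m n) (t : int)
    (j : 'I_ku) : R :=
  wbar * \sum_(1 <= k < (2 * H).+1) rnorm1 (row j Du *m Phiu A B K H Ms t k).

Definition Lg {n m kx ku : nat} (B : 'M[R]_(n, m)) (Dx : 'M[R]_(kx, n))
    (Du : 'M[R]_(ku, m)) (wbar kappa : R) (H : nat) : R :=
  wbar * Num.sqrt n%:R * Num.max (mxnorm_inf Dx) (mxnorm_inf Du) * kappa ^+ 3
  * kappaB B * Num.sqrt H%:R.

End Defs.

From HB Require Import structures.
From mathcomp Require Import all_boot all_order all_algebra.
From mathcomp Require Import boolp classical_sets reals.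
From mathcomp Require Import ring lra zify.
Import Order.TTheory GRing.Theory Num.Theory.
Set Implicit Arguments. Unset Strict Implicit. Unset Printing Implicit Defensive.
Local Open Scope ring_scope.

(* Phi^x_k and Phi^u_k are affine in the parameters, so by the reverse triangle
   inequality |g(M) - g(M')| is at most wbar times the sum over k of
   ||D_i^T (Phi_k(M) - Phi_k(M'))||_1.  The difference Phi^x_k(M) - Phi^x_k(M') is a sum
   of terms A_K^(i-1) B (M_(t-i) - M'_(t-i))^[k-i]; for every matrix Y one has
   ||d^T Y||_1 <= ||d||_1 sqrt n ||Y||_2, and strong stability gives
   ||A_K^(i-1)||_2 <= kappa^2 (1-gamma)^(i-1).  Summing over k visits each block of
   M_(t-i) - M'_(t-i) exactly once, and Cauchy-Schwarz bounds the sum of their Frobenius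
   norms by sqrt H ||M_(t-i) - M'_(t-i)||_F.  For g^u the term M_t^[k] contributes the
   summand k = 0, and the feedback -K Phi^x_k costs one more factor kappa. *)

Section Norms.
Variable R : realType.

Lemma sqr_sum_mul_le (I : Type) (r : seq I) (x y : I -> R) :
  (\sum_(i <- r) x i * y i) ^+ 2 <=
  (\sum_(i <- r) x i ^+ 2) * (\sum_(i <- r) y i ^+ 2).
Proof.
(* Lagrange's identity: the gap is half the sum of the squares (x_i y_j - x_j y_i)^2. *)
have gap_ge0 : 0 <= \sum_(i <- r) \sum_(j <- r) (x i * y j - x j * y i) ^+ 2.
  by apply: sumr_ge0 => i _; apply: sumr_ge0 => j _; exact: sqr_ge0.
have lagrange : \sum_(i <- r) \sum_(j <- r) (x i * y j - x j * y i) ^+ 2 =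
   \sum_(i <- r) (x i ^+ 2 * (\sum_(j <- r) y j ^+ 2) + y i ^+ 2 * (\sum_(j <- r) x j ^+ 2)
      - (x i * y i * (\sum_(j <- r) x j * y j)) *+ 2).
  apply: eq_bigr => i _; rewrite !mulr_sumr -sumrMnl -big_split -sumrB /=.
  by apply: eq_bigr => j _; ring.
rewrite lagrange sumrB big_split /= sumrMnl -!mulr_suml in gap_ge0.
move: gap_ge0; rewrite [X in _ + X - _]mulrC -expr2; lra.
Qed.

Lemma sum_le_sqrt_size (I : Type) (r : seq I) (f : I -> R) :
  \sum_(i <- r) f i <= Num.sqrt (size r)%:R * Num.sqrt (\sum_(i <- r) f i ^+ 2).
Proof.
rewrite -sqrtrM ?ler0n // (le_trans (ler_norm _)) // -sqrtr_sqr ler_wsqrtr //.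
have := sqr_sum_mul_le r (fun=> 1) f.
rewrite -(sum1_size r) natr_sum /=.
by under eq_bigr do rewrite mul1r; under [\sum_(i <- r) 1 ^+ 2]eq_bigr do rewrite expr1n.
Qed.

Lemma vnorm2_ge0 n (v : 'cV[R]_n) : 0 <= vnorm2 v.
Proof. exact: sqrtr_ge0. Qed.

Lemma vnorm2_sqr n (v : 'cV[R]_n) : vnorm2 v ^+ 2 = \sum_(i < n) v i 0 ^+ 2.
Proof. by rewrite sqr_sqrtr // sumr_ge0 // => i _; exact: sqr_ge0. Qed.

Lemma vnorm2_0 n : vnorm2 (0 : 'cV[R]_n) = 0.
Proof. by rewrite /vnorm2 big1 ?sqrtr0 // => i _; rewrite mxE expr0n. Qed.

Lemma vnorm2Z n (a : R) (v : 'cV[R]_n) : vnorm2 (a *: v) = `|a| * vnorm2 v.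
Proof.
rewrite /vnorm2 -sqrtr_sqr -sqrtrM ?sqr_ge0 // mulr_sumr.
by congr Num.sqrt; apply: eq_bigr => i _; rewrite mxE exprMn.
Qed.

Lemma ler_abs_vnorm2 n (v : 'cV[R]_n) (l : 'I_n) : `|v l 0| <= vnorm2 v.
Proof.
rewrite -sqrtr_sqr ler_wsqrtr // (bigD1 l) //= lerDl.
by apply: sumr_ge0 => i _; exact: sqr_ge0.
Qed.

Lemma frob_ge0 p q (X : 'M[R]_(p, q)) : 0 <= frob X.
Proof. exact: sqrtr_ge0. Qed.

Lemma vnorm2_mulmx_frob p q (X : 'M[R]_(p, q)) (v : 'cV[R]_q) :
  vnorm2 (X *m v) <= frob X * vnorm2 v.
Proof.
rewrite -sqrtrM; last by apply: sumr_ge0 => i _; apply: sumr_ge0 => j _; exact: sqr_ge0.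
rewrite ler_wsqrtr // mulr_suml; apply: ler_sum => i _.
by rewrite mxE; exact: sqr_sum_mul_le.
Qed.

Lemma opnorm2_ub p q (X : 'M[R]_(p, q)) (v : 'cV[R]_q) :
  vnorm2 v <= 1 -> vnorm2 (X *m v) <= opnorm2 X.
Proof.
move=> v_le1; apply: ub_le_sup; last by exists v.
exists (frob X) => _ [w [w_le1 ->]]; apply: le_trans (vnorm2_mulmx_frob X w) _.
by rewrite -[leRHS]mulr1 ler_wpM2l // frob_ge0.
Qed.

Lemma opnorm2_ge0 p q (X : 'M[R]_(p, q)) : 0 <= opnorm2 X.
Proof.
by rewrite -(vnorm2_0 p) -(mulmx0 _ X); apply: opnorm2_ub; rewrite vnorm2_0.
Qed.

Lemma vnorm2_mulmx_opnorm2 p q (X : 'M[R]_(p, q)) (v : 'cV[R]_q) :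
  vnorm2 (X *m v) <= opnorm2 X * vnorm2 v.
Proof.
have [v0 | v_neq0] := eqVneq (vnorm2 v) 0.
  by apply: le_trans (vnorm2_mulmx_frob X v) _; rewrite v0 !mulr0.
have v_gt0 : 0 < vnorm2 v by rewrite lt_neqAle eq_sym v_neq0 vnorm2_ge0.
have unit_le1 : vnorm2 ((vnorm2 v)^-1 *: v) <= 1.
  by rewrite vnorm2Z gtr0_norm ?invr_gt0 // mulVf.
have := opnorm2_ub X unit_le1.
by rewrite -scalemxAr vnorm2Z gtr0_norm ?invr_gt0 // ler_pdivrMl // mulrC.
Qed.

Lemma opnorm2_le_bound p q (X : 'M[R]_(p, q)) (c : R) :
  0 <= c -> (forall v, vnorm2 (X *m v) <= c * vnorm2 v) -> opnorm2 X <= c.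
Proof.
move=> c_ge0 Xc; apply: ge_sup; first by exists (vnorm2 (X *m 0)), 0; rewrite vnorm2_0.
move=> _ [v [v_le1 ->]]; apply: le_trans (Xc v) _.
by rewrite -[leRHS]mulr1 ler_wpM2l.
Qed.

Lemma opnorm2_frob p q (X : 'M[R]_(p, q)) : opnorm2 X <= frob X.
Proof. exact: opnorm2_le_bound (frob_ge0 X) (vnorm2_mulmx_frob X). Qed.

Lemma opnorm2M p q r (X : 'M[R]_(p, q)) (Y : 'M[R]_(q, r)) :
  opnorm2 (X *m Y) <= opnorm2 X * opnorm2 Y.
Proof.
apply: opnorm2_le_bound; first by rewrite mulr_ge0 ?opnorm2_ge0.
move=> v; rewrite -mulmxA -mulrA; apply: le_trans (vnorm2_mulmx_opnorm2 _ _) _.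
by rewrite ler_wpM2l ?opnorm2_ge0 ?vnorm2_mulmx_opnorm2.
Qed.

Lemma opnorm2_1 n : opnorm2 (1%:M : 'M[R]_n) <= 1.
Proof. by apply: opnorm2_le_bound => // v; rewrite mul1mx mul1r. Qed.

Lemma opnorm2X n (X : 'M[R]_n) k : opnorm2 (X ^+ k) <= opnorm2 X ^+ k.
Proof.
elim: k => [|k IHk]; first by rewrite !expr0 -idmxE opnorm2_1.
rewrite !exprS; apply: le_trans (opnorm2M _ _) _.
by rewrite ler_wpM2l ?opnorm2_ge0.
Qed.

Lemma rowsum_le_opnorm2 p q (Y : 'M[R]_(p, q)) (l : 'I_p) :
  \sum_(j < q) `|Y l j| <= Num.sqrt q%:R * opnorm2 Y.
Proof.
(* Test Y against its own l-th row w: ||w||^2 = (Y w)_l <= ||Y||_2 ||w||. *)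
pose w : 'cV[R]_q := \col_j Y l j.
have w_sqr : \sum_(j < q) `|Y l j| ^+ 2 = vnorm2 w ^+ 2.
  by rewrite vnorm2_sqr; apply: eq_bigr => j _; rewrite mxE real_normK ?num_real.
have w_le : vnorm2 w <= opnorm2 Y.
  have w_sqr_le : vnorm2 w ^+ 2 <= opnorm2 Y * vnorm2 w.
    have -> : vnorm2 w ^+ 2 = (Y *m w) l 0.
      by rewrite vnorm2_sqr !mxE; apply: eq_bigr => j _; rewrite !mxE expr2.
    apply: le_trans (vnorm2_mulmx_opnorm2 Y w).
    exact: le_trans (ler_norm _) (ler_abs_vnorm2 _ l).
  have := vnorm2_ge0 w; have := opnorm2_ge0 Y; nra.
apply: le_trans (sum_le_sqrt_size _ _) _.
have -> : size (index_enum 'I_q) = q by rewrite /index_enum unlock -enumT -cardT card_ord.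
rewrite w_sqr sqrtr_sqr ger0_norm ?vnorm2_ge0 //.
by rewrite ler_wpM2l ?sqrtr_ge0.
Qed.

Lemma rnorm1_ge0 q (v : 'rV[R]_q) : 0 <= rnorm1 v.
Proof. exact: sumr_ge0. Qed.

Lemma rnorm1_0 q : rnorm1 (0 : 'rV[R]_q) = 0.
Proof. by rewrite /rnorm1 big1 // => j _; rewrite mxE normr0. Qed.

Lemma rnorm1N q (v : 'rV[R]_q) : rnorm1 (- v) = rnorm1 v.
Proof. by apply: eq_bigr => j _; rewrite mxE normrN. Qed.

Lemma rnorm1D q (v w : 'rV[R]_q) : rnorm1 (v + w) <= rnorm1 v + rnorm1 w.
Proof. by rewrite /rnorm1 -big_split; apply: ler_sum => j _; rewrite mxE ler_normD. Qed.

Lemma rnorm1B q (v w : 'rV[R]_q) : rnorm1 (v - w) <= rnorm1 v + rnorm1 w.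
Proof. by rewrite -(rnorm1N w); exact: rnorm1D. Qed.

Lemma ler_dist_rnorm1 q (v w : 'rV[R]_q) : `|rnorm1 v - rnorm1 w| <= rnorm1 (v - w).
Proof.
have := rnorm1D (v - w) w; have := rnorm1D (w - v) v.
rewrite !subrK -opprB rnorm1N ler_norml => ? ?; apply/andP; split; lra.
Qed.

Lemma rnorm1_sum q (I : Type) (r : seq I) (F : I -> 'rV[R]_q) :
  rnorm1 (\sum_(i <- r) F i) <= \sum_(i <- r) rnorm1 (F i).
Proof.
elim/big_ind2: _ => [|v1 a1 v2 a2 le1 le2|//]; first by rewrite rnorm1_0.
by apply: le_trans (rnorm1D _ _) _; exact: lerD.
Qed.

Lemma rnorm1_row_le p q (D : 'M[R]_(p, q)) (i : 'I_p) : rnorm1 (row i D) <= mxnorm_inf D.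
Proof.
rewrite /rnorm1; under eq_bigr do rewrite mxE.
exact: (le_bigmax 0 (fun i => \sum_(j < q) `|D i j|) i).
Qed.

Lemma rnorm1_mulmx p q (d : 'rV[R]_p) (Y : 'M[R]_(p, q)) :
  rnorm1 (d *m Y) <= rnorm1 d * (Num.sqrt q%:R * opnorm2 Y).
Proof.
apply: le_trans (_ : \sum_(j < q) \sum_(l < p) `|d 0 l| * `|Y l j| <= _).
  apply: ler_sum => j _; rewrite mxE; apply: le_trans (ler_norm_sum _ _ _) _.
  by apply: ler_sum => l _; rewrite normrM.
rewrite exchange_big /= mulr_suml; apply: ler_sum => l _.
by rewrite -mulr_sumr ler_wpM2l ?rowsum_le_opnorm2.
Qed.

Lemma dist_wsum_rnorm1 p q (I : Type) (r : seq I) (w : R) (d : 'rV[R]_p)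
    (F G : I -> 'M[R]_(p, q)) : 0 <= w ->
  `|w * \sum_(k <- r) rnorm1 (d *m F k) - w * \sum_(k <- r) rnorm1 (d *m G k)|
  <= w * \sum_(k <- r) rnorm1 (d *m (F k - G k)).
Proof.
move=> w_ge0; rewrite -mulrBr normrM ger0_norm // ler_wpM2l // -sumrB.
apply: le_trans (ler_norm_sum _ _ _) _; apply: ler_sum => k _.
by rewrite mulmxBr; exact: ler_dist_rnorm1.
Qed.

Lemma sum_frob_le_param_frob m n H (M : param R m n) :
  \sum_(1 <= j < H.+1) frob (M j) <= Num.sqrt H%:R * param_frob H M.
Proof. by apply: le_trans (sum_le_sqrt_size _ _) _; rewrite size_iota subn1. Qed.

Lemma opnorm2_le_kappaB n m (B : 'M[R]_(n, m)) : opnorm2 B <= kappaB B.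
Proof. by rewrite /kappaB le_max lexx. Qed.

Lemma kappaB_ge1 n m (B : 'M[R]_(n, m)) : 1 <= kappaB B.
Proof. by rewrite /kappaB le_max lexx orbT. Qed.

Lemma kappaB_ge0 n m (B : 'M[R]_(n, m)) : 0 <= kappaB B.
Proof. exact: le_trans ler01 (kappaB_ge1 B). Qed.

End Norms.

Lemma sum_shifted_window (V : nmodType) (N i : nat) (F : nat -> V) : (i <= N)%N ->
  \sum_(1 <= k < (2 * N).+1) (if (i < k)%N && (k - i <= N)%N then F (k - i)%N else 0)
  = \sum_(1 <= j < N.+1) F j.
Proof.
move=> iN; rewrite (big_cat_nat (n := i.+1)) //=; last lia.
rewrite [X in X + _]big_nat_cond [X in X + _]big1 ?add0r; last first.
  by move=> k /andP[/andP[_ ki] _]; rewrite ifF //; lia.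
rewrite (big_cat_nat (n := i + N.+1)) //=; try lia.
rewrite [X in _ + X]big_nat_cond [X in _ + X]big1 ?addr0; last first.
  by move=> k /andP[/andP[ik _] _]; rewrite ifF //; lia.
rewrite -{1}(add1n i) big_addn addKn big_nat_cond [RHS]big_nat_cond.
by apply: eq_bigr => k /andP[/andP[k1 kN] _]; rewrite ifT ?addnK //; lia.
Qed.

Lemma conj_unitmxX (R : comUnitRingType) n (Q L : 'M[R]_n) k : Q \in unitmx ->
  (invmx Q *m L *m Q) ^+ k = invmx Q *m L ^+ k *m Q.
Proof.
move=> Qu; elim: k => [|k IHk]; first by rewrite !expr0 -idmxE mulmx1 mulVmx.
rewrite exprSr IHk -!mulmxE exprSr -mulmxE !mulmxA.
by rewrite -[invmx Q *m L ^+ k *m Q *m invmx Q]mulmxA mulmxV // mulmx1.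
Qed.

Lemma ler_Lg (R : realType) n m kx ku (B : 'M[R]_(n, m)) (Dx : 'M[R]_(kx, n))
    (Du : 'M[R]_(ku, m)) (wbar kappa : R) (H : nat) (a c S : R) :
  0 <= wbar -> 0 <= a -> a <= Num.max (mxnorm_inf Dx) (mxnorm_inf Du) ->
  0 <= c -> c <= kappa ^+ 3 * kappaB B -> 0 <= S ->
  wbar * (a * Num.sqrt n%:R * Num.sqrt H%:R * (c * S)) <= Lg B Dx Du wbar kappa H * S.
Proof.
move=> wbar_ge0 a_ge0 a_le c_ge0 c_le S_ge0.
rewrite [leRHS](_ : _ = wbar * (Num.max (mxnorm_inf Dx) (mxnorm_inf Du) *
    Num.sqrt n%:R * Num.sqrt H%:R * (kappa ^+ 3 * kappaB B * S))); last by rewrite /Lg; ring.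
rewrite ler_wpM2l //; apply: ler_pM; rewrite ?mulr_ge0 ?sqrtr_ge0 ?ler_wpM2r ?sqrtr_ge0 //.
Qed.

Section DisturbanceResponse.
Variables (R : realType) (n m : nat) (A : 'M[R]_n) (B : 'M[R]_(n, m)) (K : 'M[R]_(m, n)).
Variables (kappa gamma : R) (H : nat).
Hypothesis stable : strongly_stable A B K kappa gamma.

Lemma strongly_stable_opnorm2X k :
  opnorm2 ((A - B *m K) ^+ k) <= kappa ^+ 2 * (1 - gamma) ^+ k.
Proof.
have [Q [L [Qu -> L_le [Q_le Qinv_le _]]]] := stable.
have L_ge0 := opnorm2_ge0 L.
rewrite conj_unitmxX // expr2 mulrAC.
apply: le_trans (opnorm2M _ _) _; apply: ler_pM; rewrite ?opnorm2_ge0 //.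
apply: le_trans (opnorm2M _ _) _; apply: ler_pM; rewrite ?opnorm2_ge0 //.
by apply: le_trans (opnorm2X _ _) _; rewrite lerXn2r ?nnegrE // (le_trans L_ge0).
Qed.

Lemma Phix_sub (Ms Mt : int -> param R m n) t k :
  Phix A B K H Ms t k - Phix A B K H Mt t k =
  \sum_(1 <= i < H.+1) (if (i < k)%N && (k - i <= H)%N
     then (A - B *m K) ^+ i.-1 *m B *m param_sub (Ms (t - i%:Z)) (Mt (t - i%:Z)) (k - i)%N
     else 0).
Proof.
rewrite /Phix opprD addrACA subrr add0r -sumrB; apply: eq_bigr => i _.
by case: ifP => _; rewrite ?subrr // mulmxBr.
Qed.

Lemma Phiu_sub (Ms Mt : int -> param R m n) t k :
  Phiu A B K H Ms t k - Phiu A B K H Mt t k =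
  (if (k <= H)%N then param_sub (Ms t) (Mt t) k else 0) -
  K *m (Phix A B K H Ms t k - Phix A B K H Mt t k).
Proof.
have subr_interchange (a b x y : 'M[R]_(m, n)) : a - x - (b - y) = a - b - (x - y).
  by rewrite !opprB addrACA [RHS]addrACA [- x + _]addrC.
by rewrite /Phiu mulmxBr subr_interchange; case: ifP => _; rewrite ?subrr.
Qed.

Local Notation past_dist Ms Mt t :=
  (\sum_(1 <= i < H.+1) (1 - gamma) ^+ i.-1 *
     param_frob H (param_sub (Ms (t - i%:Z)) (Mt (t - i%:Z)))).

Let one_sub_gamma_ge0 : 0 <= 1 - gamma.
Proof. by have [_ [L [_ _ L_le _]]] := stable; exact: le_trans (opnorm2_ge0 L) L_le. Qed.

Let kappa_ge0 : 0 <= kappa.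
Proof. by have [Q [_ [_ _ _ [Q_le _ _]]]] := stable; exact: le_trans (opnorm2_ge0 Q) Q_le. Qed.

Lemma past_dist_ge0 (Ms Mt : int -> param R m n) t : 0 <= past_dist Ms Mt t.
Proof. by apply: sumr_ge0 => i _; rewrite mulr_ge0 ?exprn_ge0 ?sqrtr_ge0. Qed.

Lemma rnorm1_response_le p (P : 'M[R]_(p, n)) (d : 'rV[R]_p) (X : 'M[R]_(m, n)) i :
  rnorm1 (d *m (P *m ((A - B *m K) ^+ i *m B *m X)))
  <= rnorm1 d * Num.sqrt n%:R * (opnorm2 P * kappa ^+ 2 * kappaB B) *
     ((1 - gamma) ^+ i * frob X).
Proof.
have X_le : opnorm2 ((A - B *m K) ^+ i *m B *m X)
            <= kappa ^+ 2 * (1 - gamma) ^+ i * kappaB B * frob X.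
  apply: le_trans (opnorm2M _ _) _; apply: ler_pM; rewrite ?opnorm2_ge0 ?opnorm2_frob //.
  apply: le_trans (opnorm2M _ _) _; apply: ler_pM; rewrite ?opnorm2_ge0 //.
    exact: strongly_stable_opnorm2X.
  exact: opnorm2_le_kappaB.
apply: le_trans (rnorm1_mulmx _ _) _.
rewrite [leRHS](_ : _ = rnorm1 d * (Num.sqrt n%:R * (opnorm2 P *
    (kappa ^+ 2 * (1 - gamma) ^+ i * kappaB B * frob X)))); last by ring.
rewrite ler_wpM2l ?rnorm1_ge0 // ler_wpM2l ?sqrtr_ge0 //.
by apply: le_trans (opnorm2M _ _) _; rewrite ler_wpM2l ?opnorm2_ge0.
Qed.

Lemma sum_rnorm1_mulmx_Phix_sub p (P : 'M[R]_(p, n)) (d : 'rV[R]_p) (Ms Mt : int -> param R m n) t :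
  \sum_(1 <= k < (2 * H).+1)
     rnorm1 (d *m (P *m (Phix A B K H Ms t k - Phix A B K H Mt t k)))
  <= rnorm1 d * Num.sqrt n%:R * Num.sqrt H%:R *
     (opnorm2 P * kappa ^+ 2 * kappaB B * past_dist Ms Mt t).
Proof.
set C := rnorm1 d * Num.sqrt n%:R * (opnorm2 P * kappa ^+ 2 * kappaB B).
have C_ge0 : 0 <= C.
  by rewrite /C !mulr_ge0 ?rnorm1_ge0 ?sqrtr_ge0 ?opnorm2_ge0 ?kappaB_ge0.
pose dM i j := frob (param_sub (Ms (t - i%:Z)) (Mt (t - i%:Z)) j).
apply: le_trans (_ : _ <= \sum_(1 <= k < (2 * H).+1) \sum_(1 <= i < H.+1)
    (if (i < k)%N && (k - i <= H)%N then C * ((1 - gamma) ^+ i.-1 * dM i (k - i)%N) else 0)) _.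
  apply: ler_sum => k _; rewrite Phix_sub !mulmx_sumr.
  apply: le_trans (rnorm1_sum _ _) _; apply: ler_sum => i _.
  by case: ifP => _; [exact: rnorm1_response_le | rewrite !mulmx0 rnorm1_0].
rewrite exchange_big_nat /=.
rewrite [leRHS](_ : _ = \sum_(1 <= i < H.+1) C * ((1 - gamma) ^+ i.-1 *
    (Num.sqrt H%:R * param_frob H (param_sub (Ms (t - i%:Z)) (Mt (t - i%:Z))))));
  last by rewrite !mulr_sumr; apply: eq_bigr => i _; rewrite /C; set pf := param_frob _ _; ring.
apply: ler_sum_nat => i /andP[_ iH].
rewrite (@sum_shifted_window _ H i (fun j => C * ((1 - gamma) ^+ i.-1 * dM i j))) //.
rewrite -!mulr_sumr ler_wpM2l // ler_wpM2l ?exprn_ge0 //.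
exact: sum_frob_le_param_frob.
Qed.

Lemma sum_rnorm1_Phix_sub (d : 'rV[R]_n) (Ms Mt : int -> param R m n) t :
  \sum_(1 <= k < (2 * H).+1) rnorm1 (d *m (Phix A B K H Ms t k - Phix A B K H Mt t k))
  <= rnorm1 d * Num.sqrt n%:R * Num.sqrt H%:R *
     (kappa ^+ 2 * kappaB B * past_dist Ms Mt t).
Proof.
have := sum_rnorm1_mulmx_Phix_sub 1%:M d Ms Mt t; under eq_bigr do rewrite mul1mx.
move/le_trans; apply.
rewrite ler_wpM2l ?mulr_ge0 ?rnorm1_ge0 ?sqrtr_ge0 // -!mulrA.
by rewrite ler_piMl ?mulr_ge0 ?sqr_ge0 ?kappaB_ge0 ?past_dist_ge0 ?opnorm2_1.
Qed.

Lemma sum_rnorm1_Phiu_sub (d : 'rV[R]_m) (Ms Mt : int -> param R m n) t :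
  \sum_(1 <= k < (2 * H).+1) rnorm1 (d *m (Phiu A B K H Ms t k - Phiu A B K H Mt t k))
  <= rnorm1 d * Num.sqrt n%:R * Num.sqrt H%:R *
     (param_frob H (param_sub (Ms t) (Mt t)) +
      opnorm2 K * kappa ^+ 2 * kappaB B * past_dist Ms Mt t).
Proof.
have current_le : \sum_(1 <= k < (2 * H).+1)
    rnorm1 (d *m (if (k <= H)%N then param_sub (Ms t) (Mt t) k else 0))
    <= rnorm1 d * Num.sqrt n%:R * Num.sqrt H%:R * param_frob H (param_sub (Ms t) (Mt t)).
  pose f j := rnorm1 d * Num.sqrt n%:R * frob (param_sub (Ms t) (Mt t) j).
  apply: le_trans (_ : _ <= \sum_(1 <= k < (2 * H).+1)
      (if (0 < k)%N && (k - 0 <= H)%N then f (k - 0)%N else 0)) _.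
    apply: ler_sum_nat => k /andP[k_gt0 _]; rewrite k_gt0 subn0 /=.
    case: ifP => _; last by rewrite mulmx0 rnorm1_0.
    apply: le_trans (rnorm1_mulmx _ _) _; rewrite /f -mulrA.
    by rewrite ler_wpM2l ?rnorm1_ge0 // ler_wpM2l ?sqrtr_ge0 ?opnorm2_frob.
  rewrite (@sum_shifted_window _ H 0 f) // /f -mulr_sumr -!mulrA.
  rewrite ler_wpM2l ?rnorm1_ge0 // ler_wpM2l ?sqrtr_ge0 //.
  exact: sum_frob_le_param_frob.
apply: le_trans (_ : _ <= \sum_(1 <= k < (2 * H).+1)
    (rnorm1 (d *m (if (k <= H)%N then param_sub (Ms t) (Mt t) k else 0)) +
     rnorm1 (d *m (K *m (Phix A B K H Ms t k - Phix A B K H Mt t k))))) _.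
  by apply: ler_sum => k _; rewrite Phiu_sub mulmxBr; exact: rnorm1B.
rewrite big_split mulrDr; apply: lerD; first exact: current_le.
exact: sum_rnorm1_mulmx_Phix_sub.
Qed.

Lemma gx_lipschitz kx ku (Dx : 'M[R]_(kx, n)) (Du : 'M[R]_(ku, m)) (wbar : R)
    (Ms Mt : int -> param R m n) t (i : 'I_kx) :
  0 <= wbar -> 1 <= kappa ->
  `|gx A B K Dx wbar H Ms t i - gx A B K Dx wbar H Mt t i|
  <= Lg B Dx Du wbar kappa H * past_dist Ms Mt t.
Proof.
move=> wbar_ge0 kappa_ge1; rewrite /gx.
apply: le_trans (@dist_wsum_rnorm1 _ _ _ _ _ _ _
  (Phix A B K H Ms t) (Phix A B K H Mt t) wbar_ge0) _.
apply: le_trans (ler_wpM2l wbar_ge0 (sum_rnorm1_Phix_sub _ _ _ _)) _.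
apply: ler_Lg; rewrite ?rnorm1_ge0 ?mulr_ge0 ?sqr_ge0 ?kappaB_ge0 ?past_dist_ge0 //.
  by rewrite le_max rnorm1_row_le.
by rewrite ler_wpM2r ?kappaB_ge0 // ler_weXn2l.
Qed.

Lemma gu_lipschitz kx ku (Dx : 'M[R]_(kx, n)) (Du : 'M[R]_(ku, m)) (wbar : R)
    (Ms Mt : int -> param R m n) t (j : 'I_ku) :
  0 <= wbar -> 1 <= kappa ->
  `|gu A B K Du wbar H Ms t j - gu A B K Du wbar H Mt t j|
  <= Lg B Dx Du wbar kappa H *
     \sum_(0 <= k < H.+1) (1 - gamma) ^+ k.-1 *
        param_frob H (param_sub (Ms (t - k%:Z)) (Mt (t - k%:Z))).
Proof.
move=> wbar_ge0 kappa_ge1; rewrite big_ltn // expr0 mul1r subr0 /gu.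
apply: le_trans (@dist_wsum_rnorm1 _ _ _ _ _ _ _
  (Phiu A B K H Ms t) (Phiu A B K H Mt t) wbar_ge0) _.
apply: le_trans (ler_wpM2l wbar_ge0 (sum_rnorm1_Phiu_sub _ _ _ _)) _.
set cur_dist := param_frob H _.
have gain_ge1 : 1 <= kappa ^+ 3 * kappaB B by rewrite mulr_ege1 ?exprn_ege1 ?kappaB_ge1.
have K_gain_le : opnorm2 K * kappa ^+ 2 * kappaB B <= kappa ^+ 3 * kappaB B.
  have [_ [_ [_ _ _ [_ _ K_le]]]] := stable.
  by rewrite ler_wpM2r ?kappaB_ge0 // exprS ler_wpM2r ?sqr_ge0.
apply: le_trans (_ : _ <= wbar * (rnorm1 (row j Du) * Num.sqrt n%:R * Num.sqrt H%:R *
    (kappa ^+ 3 * kappaB B * (cur_dist + past_dist Ms Mt t)))) _.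
  rewrite ler_wpM2l // ler_wpM2l ?mulr_ge0 ?rnorm1_ge0 ?sqrtr_ge0 // mulrDr lerD //.
    by rewrite ler_peMl ?sqrtr_ge0.
  by rewrite ler_wpM2r ?past_dist_ge0.
apply: ler_Lg; rewrite ?rnorm1_ge0 ?addr_ge0 ?sqrtr_ge0 ?past_dist_ge0 //.
  by rewrite le_max rnorm1_row_le orbT.
exact: le_trans ler01 gain_ge1.
Qed.

End DisturbanceResponse.

Theorem lemma16 (R : realType) (n m kx ku : nat)
  (A : 'M[R]_n) (B : 'M[R]_(n, m)) (wbar : R)
  (Dx : 'M[R]_(kx, n)) (Du : 'M[R]_(ku, m))
  (kappa gamma : R) (K : 'M[R]_(m, n)) (H : nat)
  (Ms Mt : int -> param R m n) :
  0 < wbar -> 1 <= kappa -> 0 < gamma -> gamma <= 1 ->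
  strongly_stable A B K kappa gamma -> (1 <= H)%N ->
  (forall s : int, in_calM H kappa gamma (Ms s)) ->
  (forall s : int, in_calM H kappa gamma (Mt s)) ->
  forall t : int,
    (forall i : 'I_kx,
       `|gx A B K Dx wbar H Ms t i - gx A B K Dx wbar H Mt t i|
       <= Lg B Dx Du wbar kappa H *
          \sum_(1 <= k < H.+1) (1 - gamma) ^+ k.-1 *
             param_frob H (param_sub (Ms (t - k%:Z)) (Mt (t - k%:Z)))) /\
    (forall j : 'I_ku,
       `|gu A B K Du wbar H Ms t j - gu A B K Du wbar H Mt t j|
       <= Lg B Dx Du wbar kappa H *
          \sum_(0 <= k < H.+1) (1 - gamma) ^+ k.-1 *
             param_frob H (param_sub (Ms (t - k%:Z)) (Mt (t - k%:Z)))).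
Proof.
move=> wbar_gt0 kappa_ge1 _ _ stable _ _ _ t.
by split=> [i | j]; [apply: (gx_lipschitz H stable) | apply: (gu_lipschitz H stable)];
  rewrite ?(ltW wbar_gt0).
Qed.
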